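(* Let $(S,\mathfrak{n})$ be a Noetherian local ring and $I$ an ideal of $S$. The following are equivalent: (1) $I$ is strongly Lech-independent. (2) For every minimal generating sequence $x_1,\dots,x_r$ of $I$ there is a standard set $\Gamma$ of monomials in $P=k[T_1,\dots,T_r]$ such that for every $i\ge0$, $I^i/I^{i+1}$ is free over $S/I$ with basis the classes of $u(x)$, $u\in\Gamma_i$. (3) For every minimal generating sequence $x_1,\dots,x_r$ of $I$ there is a standard set $\Gamma$ such that for every $i\ge0$, $x_1,\dots,x_r$ is $\Gamma$-expandable from degree $i$ to $i+1$. (4) For every minimal generating sequence $x_1,\dots,x_r$ of $I$ there is a standard set $\Gamma$ such that for all $0\le i<j$, $x_1,\dots,x_r$ is $\Gamma$-expandable from degree $i$ to $j$. If moreover $S$ is complete, these are also equivalent to: (5) For every minimal generating sequence $x_1,\dots,x_r$ of $I$ there is a standard set $\Gamma$ such that for every $i\ge0$, $x_1,\dots,x_r$ is $\Gamma$-expandable from degree $i$ to $\infty$.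
   Context: $I$ is strongly Lech-independent if $I^i/I^{i+1}$ is free over $S/I$ for all $i$. A standard set is a set of monomials closed under taking divisors; $\Gamma_i$ is the set of its monomials of degree $i$. For $u=T_1^{a_1}\cdots T_r^{a_r}$, $u(x)=x_1^{a_1}\cdots x_r^{a_r}$. A lifting is a map $\sigma:S/I\to S$ with $\sigma(0)=0$ and $\pi\circ\sigma=\mathrm{id}_{S/I}$. For $0\le i<j<\infty$, $x_1,\dots,x_r$ is $\Gamma$-expandable from degree $i$ to $j$ if for every lifting $\sigma$, every $f\in I^i$ has a unique representation $f\equiv\sum_{u\in\Gamma_k,\,i\le k\le j-1}f_uu(x)\pmod{I^j}$ with all $f_u\in\sigma(S/I)$; for $S$ complete, $\Gamma$-expandable from degree $i$ to $\infty$ means every $f\in I^i$ has, for every lifting $\sigma$, a unique representation $f=\sum_{u\in\Gamma_k,\,k\ge i}f_uu(x)$ (convergent sum) with all $f_u\in\sigma(S/I)$. *)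

From HB Require Import structures.
From mathcomp Require Import all_boot all_algebra.
Set Implicit Arguments. Unset Strict Implicit. Unset Printing Implicit Defensive.
Import GRing.Theory.
Local Open Scope ring_scope.

Section Defs.
Variable S : comNzRingType.

Definition is_ideal (I : S -> Prop) : Prop :=
  [/\ I 0, (forall a b, I a -> I b -> I (a + b)) & (forall c a, I a -> I (c * a))].

Definition span (P : S -> Prop) (f : S) : Prop :=
  exists (m : nat) (c g : 'I_m -> S),
    (forall k, P (g k)) /\ f = \sum_(k < m) c k * g k.

Fixpoint ideal_pow (I : S -> Prop) (i : nat) : S -> Prop :=
  match i with
  | 0 => fun _ => True
  | i'.+1 => span (fun z => exists a b, [/\ ideal_pow I i' a, I b & z = a * b])
  end.

Definition gen_by (r : nat) (x : 'I_r -> S) (f : S) : Prop :=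
  exists c : 'I_r -> S, f = \sum_(k < r) c k * x k.

Definition generates (I : S -> Prop) (r : nat) (x : 'I_r -> S) : Prop :=
  forall f, I f <-> gen_by x f.

Definition min_gen_seq (I : S -> Prop) (r : nat) (x : 'I_r -> S) : Prop :=
  generates I x /\ forall (r' : nat) (x' : 'I_r' -> S), generates I x' -> (r <= r')%N.

Definition noetherian : Prop :=
  forall J : S -> Prop, is_ideal J -> exists (r : nat) (x : 'I_r -> S), generates J x.

Definition maximal_ideal (m : S -> Prop) : Prop :=
  [/\ is_ideal m, ~ m 1 &
      forall J, is_ideal J -> (forall a, m a -> J a) -> (forall a, J a <-> m a) \/ J 1].

Definition local_ring (n : S -> Prop) : Prop :=
  maximal_ideal n /\ forall m, maximal_ideal m -> forall a, m a <-> n a.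

Definition adic_cauchy (n : S -> Prop) (a : nat -> S) : Prop :=
  forall k, exists N, forall p q, (N <= p)%N -> (N <= q)%N -> ideal_pow n k (a p - a q).

Definition adic_limit (n : S -> Prop) (a : nat -> S) (l : S) : Prop :=
  forall k, exists N, forall p, (N <= p)%N -> ideal_pow n k (a p - l).

Definition complete (n : S -> Prop) : Prop :=
  forall a, adic_cauchy n a -> exists l, adic_limit n a l.

(* the classes of e j (j in A) form a basis of the S/I-module I^i/I^(i+1) *)
Definition quot_basis (I : S -> Prop) (i : nat) (J : eqType) (A : pred J) (e : J -> S)
  : Prop :=
  [/\ forall j, A j -> ideal_pow I i (e j),
      forall f, ideal_pow I i f ->
        exists (s : seq J) (c : J -> S),
          all A s /\ ideal_pow I i.+1 (f - \sum_(j <- s) c j * e j) &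
      forall (s : seq J) (c : J -> S), uniq s -> all A s ->
        ideal_pow I i.+1 (\sum_(j <- s) c j * e j) -> forall j, j \in s -> I (c j)].

Definition quot_free (I : S -> Prop) (i : nat) : Prop :=
  exists (J : eqType) (e : J -> S), quot_basis I i (@predT J) e.

Definition strongly_Lech_independent (I : S -> Prop) : Prop :=
  forall i, quot_free I i.

(* monomials of k[T_1..T_r] are identified with exponent vectors *)
Definition mon (r : nat) := {ffun 'I_r -> nat}.

Definition mdeg (r : nat) (u : mon r) : nat := (\sum_(k < r) u k)%N.

Definition monx (r : nat) (x : 'I_r -> S) (u : mon r) : S := \prod_(k < r) x k ^+ u k.

Definition standard_set (r : nat) (G : pred (mon r)) : Prop :=
  forall u v : mon r, (forall k, (v k <= u k)%N) -> G u -> G v.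

(* all monomials with every exponent < j (contains all monomials of degree < j) *)
Definition mons_below (r j : nat) : seq (mon r) :=
  [seq [ffun k => nat_of_ord (v k)] | v : {ffun 'I_r -> 'I_j} <- enum {ffun 'I_r -> 'I_j}].

Definition trunc_sum (r : nat) (x : 'I_r -> S) (G : pred (mon r)) (i j : nat)
  (c : mon r -> S) : S :=
  \sum_(u <- mons_below r j | G u && (i <= mdeg u < j)%N) c u * monx x u.

(* L is the image sigma(S/I) of a lifting sigma : S/I -> S with sigma(0) = 0,
   pi o sigma = id; equivalently, a set of representatives of S/I (exactly one
   element in each coset of I) containing 0. *)
Definition lifting_image (I : S -> Prop) (L : S -> Prop) : Prop :=
  L 0 /\ forall a, exists b, [/\ L b, I (a - b) & forall b', L b' -> I (a - b') -> b' = b].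

Definition coefs_in (r : nat) (G : pred (mon r)) (L : S -> Prop) (i j : nat)
  (c : mon r -> S) : Prop :=
  forall u, G u -> (i <= mdeg u < j)%N -> L (c u).

Definition expandable (I : S -> Prop) (r : nat) (x : 'I_r -> S) (G : pred (mon r))
  (i j : nat) : Prop :=
  forall L, lifting_image I L -> forall f, ideal_pow I i f ->
    (exists c, coefs_in G L i j c /\ ideal_pow I j (f - trunc_sum x G i j c)) /\
    (forall c c', coefs_in G L i j c -> coefs_in G L i j c' ->
       ideal_pow I j (f - trunc_sum x G i j c) ->
       ideal_pow I j (f - trunc_sum x G i j c') ->
       forall u, G u -> (i <= mdeg u < j)%N -> c u = c' u).

Definition series_rep (I : S -> Prop) (r : nat) (x : 'I_r -> S) (G : pred (mon r))
  (i : nat) (c : mon r -> S) (f : S) : Prop :=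
  adic_limit I (fun N => trunc_sum x G i N c) f.

Definition expandable_inf (I : S -> Prop) (r : nat) (x : 'I_r -> S) (G : pred (mon r))
  (i : nat) : Prop :=
  forall L, lifting_image I L -> forall f, ideal_pow I i f ->
    (exists c, (forall u, G u -> (i <= mdeg u)%N -> L (c u)) /\ series_rep I x G i c f) /\
    (forall c c', (forall u, G u -> (i <= mdeg u)%N -> L (c u)) ->
       (forall u, G u -> (i <= mdeg u)%N -> L (c' u)) ->
       series_rep I x G i c f -> series_rep I x G i c' f ->
       forall u, G u -> (i <= mdeg u)%N -> c u = c' u).

Definition cond2 (I : S -> Prop) : Prop :=
  forall (r : nat) (x : 'I_r -> S), min_gen_seq I x ->
    exists G : pred (mon r), standard_set G /\
      forall i, quot_basis I i [pred u | G u && (mdeg u == i)] (monx x).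

Definition cond3 (I : S -> Prop) : Prop :=
  forall (r : nat) (x : 'I_r -> S), min_gen_seq I x ->
    exists G : pred (mon r), standard_set G /\ forall i, expandable I x G i i.+1.

Definition cond4 (I : S -> Prop) : Prop :=
  forall (r : nat) (x : 'I_r -> S), min_gen_seq I x ->
    exists G : pred (mon r), standard_set G /\
      forall i j, (i < j)%N -> expandable I x G i j.

Definition cond5 (I : S -> Prop) : Prop :=
  forall (r : nat) (x : 'I_r -> S), min_gen_seq I x ->
    exists G : pred (mon r), standard_set G /\ forall i, expandable_inf I x G i.

End Defs.

(* The substance is (1) => (2). For a generating sequence x of I call a
   monomial u of degree d redundant when u(x) is, modulo n I^d + I^(d+1), a
   combination of lexicographically smaller monomials of degree d; redundancy
   is stable under multiplication, so the other monomials form a standard set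
   Gamma. By lexicographic induction and Nakayama the u(x), u in Gamma_d,
   generate I^d/I^(d+1); a relation among them with a unit coefficient at its
   lexicographically largest term would make that monomial redundant, so they
   are independent modulo n. Passing to a basis of the free module
   I^d/I^(d+1) and back is then the identity modulo n, hence invertible, and
   transports the independence of the basis to the u(x). The remaining
   implications are bookkeeping with truncated expansions: a basis in degree i
   amounts to unique expansions from degree i to i+1, these compose along the
   degrees, and compatible finite expansions assemble into a convergent series.
   Noetherianity provides maximal ideals above proper ideals (so non-units lie
   in n) and minimal generating sequences. *)

From mathcomp Require Import all_boot all_algebra ring zify.
From Stdlib Require Import Classical ClassicalEpsilon FunctionalExtensionality PropExtensionality.
Set Implicit Arguments. Unset Strict Implicit. Unset Printing Implicit Defensive.
Import GRing.Theory.
Local Open Scope ring_scope.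

Section Ideals.
Variable S : comNzRingType.
Implicit Types (I Z P Q : S -> Prop) (a b c f y : S).

Lemma ideal0 I : is_ideal I -> I 0. Proof. by case. Qed.

Lemma idealD I a b : is_ideal I -> I a -> I b -> I (a + b).
Proof. by case=> _ hD _; apply: hD. Qed.

Lemma idealMl I c a : is_ideal I -> I a -> I (c * a).
Proof. by case=> _ _ hM; apply: hM. Qed.

Lemma idealMr I c a : is_ideal I -> I a -> I (a * c).
Proof. by move=> hI ha; rewrite mulrC; apply: idealMl. Qed.

Lemma idealN I a : is_ideal I -> I a -> I (- a).
Proof. by move=> hI ha; rewrite -mulN1r; apply: idealMl. Qed.

Lemma idealB I a b : is_ideal I -> I a -> I b -> I (a - b).
Proof. by move=> hI ha hb; apply: idealD => //; apply: idealN. Qed.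

Lemma ideal_subC I a b : is_ideal I -> I (a - b) -> I (b - a).
Proof. by move=> hI hab; rewrite -opprB; apply: idealN. Qed.

Lemma ideal_subK I a b : is_ideal I -> I (a - b) -> I b -> I a.
Proof. by move=> hI hab hb; rewrite -(subrK b a); apply: idealD. Qed.

Lemma ideal_sum I (T : Type) (s : seq T) (p : pred T) (F : T -> S) :
  is_ideal I -> (forall j, p j -> I (F j)) -> I (\sum_(j <- s | p j) F j).
Proof.
move=> hI hF; elim/big_rec: _ => [|j y pj hy]; first exact: ideal0.
by apply: idealD => //; apply: hF.
Qed.

Lemma ideal_sum_seq I (T : eqType) (s : seq T) (F : T -> S) :
  is_ideal I -> (forall j, j \in s -> I (F j)) -> I (\sum_(j <- s) F j).
Proof. by move=> hI hF; rewrite big_seq; apply: ideal_sum. Qed.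

Lemma span_mem P y : P y -> span P y.
Proof.
by move=> hy; exists 1%N, (fun _ => 1), (fun _ => y); rewrite big_ord1 mul1r.
Qed.

Lemma span_ideal P : is_ideal (span P).
Proof.
split.
- by exists 0%N, (fun _ => 0), (fun _ => 0); rewrite big_ord0; split=> [[]|].
- move=> _ _ [m [c [g [hg ->]]]] [m' [c' [g' [hg' ->]]]].
  pose sp (F : 'I_m -> S) (F' : 'I_m' -> S) (k : 'I_(m + m')) :=
    match split k with inl i => F i | inr i => F' i end.
  exists (m + m')%N, (sp c c'), (sp g g'); split=> [k|].
    by rewrite /sp; case: (split k).
  rewrite big_split_ord /sp; congr (_ + _); apply: eq_bigr => i _.
    by rewrite (unsplitK (inl _ i)).
  by rewrite (unsplitK (inr _ i)).
- move=> c0 _ [m [c [g [hg ->]]]]; exists m, (fun k => c0 * c k), g; split=> //.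
  by rewrite mulr_sumr; apply: eq_bigr => i _; rewrite mulrA.
Qed.

Lemma span_min P Z f : is_ideal Z -> (forall y, P y -> Z y) -> span P f -> Z f.
Proof.
move=> hZ hP [m [c [g [hg ->]]]]; apply: ideal_sum => // k _.
by apply: idealMl => //; apply: hP.
Qed.

Lemma span_sub P Q f : (forall y, P y -> span Q y) -> span P f -> span Q f.
Proof. by move=> h; apply: span_min => //; apply: span_ideal. Qed.

Lemma span_mulr P Q y0 f :
  (forall y, P y -> span Q (y * y0)) -> span P f -> span Q (f * y0).
Proof.
move=> h; apply: (@span_min P (fun f => span Q (f * y0))) => //.
split; first by rewrite mul0r; apply: ideal0; apply: span_ideal.
- by move=> a b ha hb; rewrite mulrDl; apply: idealD => //; apply: span_ideal.
- by move=> c a ha; rewrite -mulrA; apply: idealMl => //; apply: span_ideal.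
Qed.

Lemma span_splitU P Q f : span (fun y => P y \/ Q y) f ->
  exists f1 f2, [/\ span P f1, span Q f2 & f = f1 + f2].
Proof.
have hP := @span_ideal P; have hQ := @span_ideal Q.
apply: (@span_min _ (fun f => exists f1 f2, [/\ span P f1, span Q f2 & f = f1 + f2])).
- split.
  + by exists 0, 0; rewrite addr0; split=> //; apply: ideal0.
  + move=> a b [a1 [a2 [h1 h2 ->]]] [b1 [b2 [h3 h4 ->]]].
    by exists (a1 + b1), (a2 + b2); rewrite addrACA; split=> //; apply: idealD.
  + move=> c a [a1 [a2 [h1 h2 ->]]].
    by exists (c * a1), (c * a2); rewrite mulrDr; split=> //; apply: idealMl.
- move=> y [hy|hy].
  + by exists y, 0; rewrite addr0; split; [apply: span_mem | apply: ideal0 |].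
  + by exists 0, y; rewrite add0r; split; [apply: ideal0 | apply: span_mem |].
Qed.

Lemma ideal_pow_ideal I i : is_ideal (ideal_pow I i).
Proof. by case: i => [|i]; [split | apply: span_ideal]. Qed.

Lemma ideal_pow_le I i j f : (i <= j)%N -> ideal_pow I j f -> ideal_pow I i f.
Proof.
move=> /subnK <-; elim: (j - i)%N f => [//|k IH] f; rewrite addSn => hf.
apply: IH; elim: (k + i)%N f hf => [//|m IHm] f /=.
apply: span_sub => _ [a [b [ha hb ->]]]; apply: span_mem.
by exists a, b; split=> //; apply: IHm.
Qed.

Lemma ideal_pow1 I f : is_ideal I -> ideal_pow I 1 f <-> I f.
Proof.
move=> hI; split; first by apply: span_min => // _ [a [b [_ hb ->]]]; apply: idealMl.
by move=> hf; apply: span_mem; exists 1, f; rewrite mul1r.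
Qed.

Lemma ideal_powD I i j a b : is_ideal I ->
  ideal_pow I i a -> ideal_pow I j b -> ideal_pow I (i + j) (a * b).
Proof.
move=> hI ha; elim: j b => [|j IH] b hb.
  by rewrite addn0 mulrC; apply: idealMl => //; apply: ideal_pow_ideal.
rewrite addnS mulrC; apply: span_mulr hb => _ [a' [b' [ha' hb' ->]]].
apply: span_mem; exists (a * a'), b'; split=> //; first exact: IH.
by rewrite mulrC mulrA.
Qed.

Lemma ideal_pow_expr I e y : is_ideal I -> I y -> ideal_pow I e (y ^+ e).
Proof.
move=> hI hy; elim: e => [//|e IH]; rewrite exprSr -addn1.
by apply: ideal_powD => //; apply/ideal_pow1.
Qed.

Lemma ideal_powS_mul I i a b : is_ideal I ->
  I a -> ideal_pow I i b -> ideal_pow I i.+1 (a * b).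
Proof. by move=> hI ha hb; rewrite -add1n; apply: ideal_powD => //; apply/(ideal_pow1 _ hI). Qed.

End Ideals.

Definition asbool (P : Prop) : bool := if excluded_middle_informative P then true else false.

Lemma asboolP (P : Prop) : reflect P (asbool P).
Proof. by rewrite /asbool; case: excluded_middle_informative => h; constructor. Qed.

Lemma seq_choice (A : eqType) (B : Type) (b0 : B) (s : seq A) (P : A -> B -> Prop) :
  (forall a, a \in s -> exists b, P a b) ->
  exists f : A -> B, forall a, a \in s -> P a (f a).
Proof.
move=> h; apply: (choice (fun a b => a \in s -> P a b)) => a.
by case: (boolP (a \in s)) => [/h [b hb]|_]; [exists b | exists b0].
Qed.

Section FiniteStrictInduction.
Variables (T : eqType) (lt : rel T).
Hypothesis lt_trans : forall a b c, lt a b -> lt b c -> lt a c.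
Hypothesis lt_irr : forall a, ~~ lt a a.

Lemma count_lower_ltn (s : seq T) u v : v \in s -> lt v u ->
  (count (lt^~ v) s < count (lt^~ u) s)%N.
Proof.
elim: s => [//|w s IH]; rewrite inE => /orP[/eqP <-|hv] hvu /=.
  rewrite hvu (negbTE (lt_irr v)) add0n add1n ltnS.
  by apply: sub_count => w' /= /lt_trans; apply.
rewrite -addnS; apply: leq_add; last exact: IH.
by case: (boolP (lt w v)) => // /lt_trans ->.
Qed.

Lemma seq_strict_ind (D : seq T) (P : T -> Prop) :
  (forall u, u \in D -> (forall v, v \in D -> lt v u -> P v) -> P u) ->
  forall u, u \in D -> P u.
Proof.
move=> h u; move: {-1}(count _ D).+1 (ltnSn (count (lt^~ u) D)) => N.
elim: N u => [//|N IH] u hN hu; apply: h => // v hv hvu.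
have hlt := count_lower_ltn hv hvu.
by apply: IH hv; apply: leq_trans hlt hN.
Qed.

End FiniteStrictInduction.

Section Sums.
Variable S : comNzRingType.
Implicit Types (Q P : S -> Prop).

Lemma sum_kronecker (T : eqType) (D : seq T) (e : T -> S) j0 a :
  uniq D -> j0 \in D -> \sum_(j <- D) (if j == j0 then a else 0) * e j = a * e j0.
Proof.
move=> uD hj0; rewrite (big_rem j0) //= eqxx big1_seq ?addr0 // => j /andP[_].
by rewrite mem_rem_uniq // inE => /andP[/negbTE -> _]; rewrite mul0r.
Qed.

Lemma sum_over_superset (T : eqType) (e : T -> S) (s D : seq T) (c : T -> S) :
  uniq D -> {subset s <= D} ->
  exists c', \sum_(j <- s) c j * e j = \sum_(j <- D) c' j * e j.
Proof.
move=> uD; elim: s => [|j0 s IH] hs.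
  by exists (fun _ => 0); rewrite big_nil big1 // => j _; rewrite mul0r.
have [c1 e1] : exists c1, \sum_(j <- s) c j * e j = \sum_(j <- D) c1 j * e j.
  by apply: IH => j hj; apply: hs; rewrite inE hj orbT.
exists (fun j => c1 j + (if j == j0 then c j0 else 0)).
rewrite big_cons e1; under [RHS]eq_bigr do rewrite mulrDl.
by rewrite big_split /= sum_kronecker 1?addrC // hs ?mem_head.
Qed.

Lemma sum_restrict (T : eqType) (s D : seq T) (c e : T -> S) :
  uniq s -> uniq D -> {subset s <= D} ->
  \sum_(j <- D) (if j \in s then c j else 0) * e j = \sum_(j <- s) c j * e j.
Proof.
move=> us uD hsD.
rewrite (eq_bigr (fun j => if j \in s then c j * e j else 0)); last first.
  by move=> j _; case: (j \in s); rewrite ?mul0r.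
rewrite -big_mkcond /= -big_filter; apply: perm_big; apply: uniq_perm => //.
  exact: filter_uniq.
by move=> j; rewrite mem_filter; case: (boolP (j \in s)) => // /hsD ->.
Qed.

Lemma span_as_sum (T : eqType) Q P (D : seq T) (g : T -> S) f :
  is_ideal Q -> uniq D ->
  (forall y, P y -> exists a v, [/\ Q a, v \in D & y = a * g v]) ->
  span P f -> exists c, (forall v, Q (c v)) /\ f = \sum_(v <- D) c v * g v.
Proof.
move=> hQ uD hP.
apply: (@span_min _ P (fun f => exists c, (forall v, Q (c v)) /\ f = \sum_(v <- D) c v * g v)).
- split.
  + exists (fun _ => 0); split=> [_|]; first exact: ideal0.
    by rewrite big1 // => j _; rewrite mul0r.
  + move=> _ _ [c1 [h1 ->]] [c2 [h2 ->]]; exists (fun v => c1 v + c2 v); split.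
      by move=> v; apply: idealD.
    by rewrite -big_split; apply: eq_bigr => v _; rewrite mulrDl.
  + move=> c0 _ [c1 [h1 ->]]; exists (fun v => c0 * c1 v); split.
      by move=> v; apply: idealMl.
    by rewrite mulr_sumr; apply: eq_bigr => v _; rewrite mulrA.
- move=> y /hP [a [v [ha hv ->]]]; exists (fun j => if j == v then a else 0); split.
    by move=> j; case: eqP => _ //; apply: ideal0.
  by rewrite sum_kronecker.
Qed.

Lemma sum_id_sub_comp (A B : eqType) (U : seq A) (T : seq B) (c : A -> S)
    (al : A -> B -> S) (be : B -> A -> S) v : uniq U -> v \in U ->
  c v - \sum_(u <- U) ((if v == u then 1 else 0) - \sum_(b <- T) al u b * be b v) * c u =
  \sum_(b <- T) (\sum_(u <- U) c u * al u b) * be b v.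
Proof.
move=> uU hv; under eq_bigr do rewrite mulrBl.
rewrite sumrB (eq_bigr (fun u => (if u == v then c v else 0) * 1)); last first.
  by move=> u _; rewrite eq_sym; case: eqP => [->|]; rewrite ?mul1r ?mulr1 ?mul0r.
rewrite sum_kronecker // mulr1 opprB addrC subrK.
under eq_bigr do rewrite mulr_suml.
rewrite exchange_big /=; apply: eq_bigr => b _; rewrite mulr_suml.
by apply: eq_bigr => u _; rewrite mulrC mulrA.
Qed.

Lemma congr_coords_trans (N : S -> Prop) (A B C : eqType)
    (U : seq A) (T : seq B) (V : seq C) (g : A -> S) (e : B -> S) (h : C -> S)
    (al : A -> B -> S) (be : B -> C -> S) :
  is_ideal N ->
  (forall b, b \in T -> N (e b - \sum_(v <- V) be b v * h v)) ->
  forall u, N (g u - \sum_(b <- T) al u b * e b) ->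
  N (g u - \sum_(v <- V) (\sum_(b <- T) al u b * be b v) * h v).
Proof.
move=> hN hbe u hal.
have -> : \sum_(v <- V) (\sum_(b <- T) al u b * be b v) * h v =
    \sum_(b <- T) al u b * \sum_(v <- V) be b v * h v.
  under eq_bigr do rewrite mulr_suml.
  rewrite exchange_big /=; apply: eq_bigr => b _; rewrite mulr_sumr.
  by apply: eq_bigr => v _; rewrite mulrA.
rewrite -(subrK (\sum_(b <- T) al u b * e b) (g u)) -addrA; apply: idealD hal _ => //.
rewrite -sumrB; apply: ideal_sum_seq => // b hb; rewrite -mulrBr.
by apply: idealMl => //; apply: hbe.
Qed.

End Sums.

Section Monomials.
Variable r : nat.
Implicit Types u v w : mon r.

Definition mon_add u w : mon r := [ffun k => (u k + w k)%N].
Definition mon_sub u w : mon r := [ffun k => (u k - w k)%N].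
Definition mon0 : mon r := [ffun _ => 0%N].
Definition mon_unit (k0 : 'I_r) : mon r := [ffun k => nat_of_bool (k == k0)].

Lemma mdeg_add u w : mdeg (mon_add u w) = (mdeg u + mdeg w)%N.
Proof. by rewrite /mdeg -big_split /=; apply: eq_bigr => k _; rewrite ffunE. Qed.

Lemma mdeg0 : mdeg mon0 = 0%N.
Proof. by rewrite /mdeg big1 // => k _; rewrite ffunE. Qed.

Lemma mdeg_unit k0 : mdeg (mon_unit k0) = 1%N.
Proof.
rewrite /mdeg (bigD1 k0) //= ffunE eqxx big1 // => k hk.
by rewrite ffunE (negbTE hk).
Qed.

Lemma mon_subK u v : (forall k, v k <= u k)%N -> mon_add v (mon_sub u v) = u.
Proof. by move=> h; apply/ffunP => k; rewrite !ffunE subnKC. Qed.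

Lemma mons_below_mdeg j u : (mdeg u < j)%N -> u \in mons_below r j.
Proof.
case: j => [//|j] hu; apply/mapP; exists [ffun k => inord (u k)]; first by rewrite mem_enum.
apply/ffunP => k; rewrite !ffunE inordK //.
by apply: leq_ltn_trans hu; rewrite /mdeg (bigD1 k) //= leq_addr.
Qed.

Lemma uniq_mons_below j : uniq (mons_below r j).
Proof.
rewrite map_inj_uniq ?enum_uniq // => v w /ffunP h; apply/ffunP => k.
by apply: val_inj; have := h k; rewrite !ffunE.
Qed.

Lemma leq_ltnS_eq d k : (d <= k < d.+1)%N = (k == d).
Proof. by rewrite ltnS -eqn_leq eq_sym. Qed.

(* Written in the shape of [trunc_sum] so that [trunc_sum x G d d.+1] is a
   sum over [mons_deg G d]. *)
Definition mons_deg (G : pred (mon r)) d :=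
  [seq u <- mons_below r d.+1 | G u && (d <= mdeg u < d.+1)%N].

Lemma mem_mons_deg G d u : (u \in mons_deg G d) = G u && (mdeg u == d).
Proof.
rewrite mem_filter leq_ltnS_eq; case: eqP => hu; rewrite ?andbF //= andbT.
by rewrite mons_below_mdeg ?andbT // hu.
Qed.

Lemma uniq_mons_deg G d : uniq (mons_deg G d).
Proof. exact/filter_uniq/uniq_mons_below. Qed.

Definition ltlex u v : bool :=
  [exists k : 'I_r, (u k < v k)%N && [forall j : 'I_r, (j < k)%N ==> (u j == v j)]].

Lemma ltlex_irr u : ~~ ltlex u u.
Proof. by apply/existsP => -[k /andP[]]; rewrite ltnn. Qed.

Lemma ltlex_trans u v w : ltlex u v -> ltlex v w -> ltlex u w.
Proof.
move=> /existsP[k1 /andP[h1 /forallP e1]] /existsP[k2 /andP[h2 /forallP e2]].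
have agree (j : 'I_r) : (j < k1)%N -> (j < k2)%N -> u j == w j.
  by move=> hj1 hj2; rewrite (eqP (implyP (e1 j) hj1)) (implyP (e2 j) hj2).
apply/existsP; case: (ltngtP k1 k2) => hk.
- exists k1; rewrite -(eqP (implyP (e2 k1) hk)) h1 /=; apply/forallP => j.
  by apply/implyP => hj; apply: agree => //; apply: ltn_trans hk.
- exists k2; rewrite (eqP (implyP (e1 k2) hk)) h2 /=; apply/forallP => j.
  by apply/implyP => hj; apply: agree => //; apply: ltn_trans hk.
- have ek : k1 = k2 by apply: val_inj.
  subst k2; exists k1; rewrite (ltn_trans h1 h2) /=; apply/forallP => j.
  by apply/implyP => hj; apply: agree.
Qed.

Lemma ltlex_total u v : u != v -> ltlex u v || ltlex v u.
Proof.
move=> huv; have [k0 hk0] : exists k0, u k0 != v k0.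
  apply/existsP; apply: contraR huv => /existsPn h; apply/eqP/ffunP => k.
  by have := h k; rewrite negbK => /eqP.
case: (@arg_minnP _ k0 (fun k : 'I_r => u k != v k) val hk0) => k hk hmin.
have e (j : 'I_r) : (j < k)%N -> u j == v j.
  by move=> hj; apply: contraLR hj => hj; rewrite -leqNgt; apply: hmin.
case: (ltngtP (u k) (v k)) => h; last by rewrite h eqxx in hk.
- apply/orP; left; apply/existsP; exists k; rewrite h.
  by apply/forallP => j; apply/implyP; apply: e.
- apply/orP; right; apply/existsP; exists k; rewrite h.
  by apply/forallP => j; apply/implyP => hj; rewrite eq_sym; apply: e.
Qed.

Lemma ltlex_add u v w : ltlex u v -> ltlex (mon_add u w) (mon_add v w).
Proof.
move=> /existsP[k /andP[h /forallP e]]; apply/existsP; exists k.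
rewrite !ffunE ltn_add2r h /=; apply/forallP => j; apply/implyP => hj.
by rewrite !ffunE eqn_add2r (implyP (e j) hj).
Qed.

Section Evaluation.
Variables (S : comNzRingType) (x : 'I_r -> S).

Lemma monx_add u w : monx x (mon_add u w) = monx x u * monx x w.
Proof. by rewrite /monx -big_split /=; apply: eq_bigr => k _; rewrite ffunE exprD. Qed.

Lemma monx0 : monx x mon0 = 1.
Proof. by rewrite /monx big1 // => k _; rewrite ffunE expr0. Qed.

Lemma monx_unit k0 : monx x (mon_unit k0) = x k0.
Proof.
rewrite /monx (bigD1 k0) //= ffunE eqxx expr1 big1 ?mulr1 // => k hk.
by rewrite ffunE (negbTE hk) expr0.
Qed.

Variable I : S -> Prop.
Hypothesis hI : is_ideal I.

Lemma monx_ideal_pow u : (forall k, I (x k)) -> ideal_pow I (mdeg u) (monx x u).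
Proof.
move=> hx; rewrite /monx /mdeg; elim/big_rec2: _ => [//|k d p _ hp].
by apply: ideal_powD => //; apply: ideal_pow_expr.
Qed.

Lemma ideal_pow_span_monx d f : (forall f, I f -> gen_by x f) ->
  ideal_pow I d f -> span (fun y => exists v, mdeg v = d /\ y = monx x v) f.
Proof.
move=> hgen; elim: d f => [|d IH] f /=.
  move=> _; rewrite -[f]mulr1 -monx0; apply: idealMl; first exact: span_ideal.
  by apply: span_mem; exists mon0; rewrite mdeg0.
apply: span_sub => _ [a [b [ha /hgen [c ->] ->]]].
rewrite mulr_sumr; apply: ideal_sum => [|k _]; first exact: span_ideal.
rewrite mulrCA; apply: idealMl; first exact: span_ideal.
apply: span_mulr (IH _ ha) => _ [v [hv ->]]; apply: span_mem.
by exists (mon_add v (mon_unit k)); rewrite mdeg_add mdeg_unit addn1 hv monx_add monx_unit.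
Qed.

End Evaluation.
End Monomials.

Section LocalRing.
Variable S : comNzRingType.
Hypothesis noeth : noetherian S.
Implicit Types (J K : S -> Prop).

Lemma generates_mem J m (y : 'I_m -> S) i : generates J y -> J (y i).
Proof.
move=> h; apply/h; exists (fun k => if k == i then 1 else 0).
by rewrite (bigD1 i) //= eqxx mul1r big1 ?addr0 // => k /negbTE ->; rewrite mul0r.
Qed.

Lemma ideal_chain_stationary (C : nat -> S -> Prop) :
  (forall k, is_ideal (C k)) -> (forall k a, C k a -> C k.+1 a) ->
  exists k, forall a, C k.+1 a -> C k a.
Proof.
move=> hC Cinc.
have Cmono k l : (k <= l)%N -> forall a, C k a -> C l a.
  by move=> /subnK <-; elim: (l - k)%N => [//|d IH] a /IH; apply: Cinc.
pose U a := exists k, C k a.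
have hU : is_ideal U.
  split; first by exists 0%N; apply: ideal0.
  - move=> a b [k ha] [l hb]; exists (maxn k l).
    by apply: idealD; [|apply: (Cmono k) ha|apply: (Cmono l) hb]; rewrite ?leq_maxl ?leq_maxr.
  - by move=> c a [k ha]; exists k; apply: idealMl.
have [m [y hy]] := noeth hU.
have [kk hkk] := choice (fun i k => C k (y i)) (fun i => generates_mem i hy).
exists (\max_(i < m) kk i)%N => a hCa.
have /hy [c ->] : U a by exists (\max_(i < m) kk i).+1%N.
apply: ideal_sum => // i _; apply: idealMl => //.
by apply: (Cmono (kk i)) => //; apply: (leq_bigmax_cond (F := kk)).
Qed.

Lemma maximal_ideal_above J : is_ideal J -> ~ J 1 ->
  exists m, maximal_ideal m /\ forall a, J a -> m a.
Proof.
move=> hJ J1; apply: NNPP => nomax.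
pose T := {K : S -> Prop | [/\ is_ideal K, ~ K 1 & forall a, J a -> K a]}.
have ext (K : T) : exists K' : T,
    (forall a, sval K a -> sval K' a) /\ exists a, sval K' a /\ ~ sval K a.
  case: K => K [hK K1 JK]; apply: NNPP => hn; apply: nomax; exists K; split=> //.
  split=> // K0 hK0 KK0; case: (classic (K0 1)) => K01; [by right | left] => a.
  split=> [hK0a|]; last exact: KK0.
  apply: NNPP => hKa; apply: hn.
  exists (exist _ K0 (And3 hK0 K01 (fun b hb => KK0 b (JK b hb)))); split=> //.
  by exists a.
have [F hF] := choice _ ext.
pose K0 : T := exist _ J (And3 hJ J1 (fun a ha => ha)).
pose C k := sval (iter k F K0).
have hC k : is_ideal (C k) by rewrite /C; case: (iter k F _) => K [].
have [k hk] := @ideal_chain_stationary C hC (fun k => proj1 (hF (iter k F K0))).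
by have [a [haF haC]] := proj2 (hF (iter k F K0)); apply/haC/hk.
Qed.

Variable n : S -> Prop.
Hypothesis loc : local_ring n.

Lemma local_ideal : is_ideal n.
Proof. by case: loc => -[]. Qed.

Lemma local_nonunit c : ~ (exists w, w * c = 1) -> n c.
Proof.
move=> hnu; pose K a := exists s, a = s * c.
have hK : is_ideal K.
  split; first by exists 0; rewrite mul0r.
  - by move=> _ _ [s1 ->] [s2 ->]; exists (s1 + s2); rewrite mulrDl.
  - by move=> c0 _ [s ->]; exists (c0 * s); rewrite mulrA.
have [|m [hm Km]] := maximal_ideal_above hK; first by move=> [s e]; apply: hnu; exists s.
by apply/(proj2 loc m hm)/Km; exists 1; rewrite mul1r.
Qed.

Lemma local_unit_notin c : ~ n c -> exists w, w * c = 1.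
Proof. by move=> h; apply: NNPP => /local_nonunit. Qed.

Lemma local_unit_1B a : n a -> exists w, w * (1 - a) = 1.
Proof.
move=> ha; apply: NNPP => /local_nonunit h1a; case: loc => -[_ n1 _] _; apply: n1.
by rewrite -(subrK a 1); apply: idealD ha; first exact: local_ideal.
Qed.

End LocalRing.

Lemma nakayama_system (S : comNzRingType) (n N : S -> Prop) (T : eqType) (U : seq T)
    (a : T -> T -> S) (m : T -> S) :
  is_ideal n -> (forall a, n a -> exists w, w * (1 - a) = 1) -> is_ideal N -> uniq U ->
  (forall k l, k \in U -> l \in U -> n (a k l)) ->
  (forall k, k \in U -> N (m k - \sum_(l <- U) a k l * m l)) ->
  forall k, k \in U -> N (m k).
Proof.
move=> hn hunit hN; elim: U a => [//|l0 U IH] a /= /andP[l0U uU] ha hm.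
have [w hw] := hunit _ (ha l0 l0 (mem_head _ _) (mem_head _ _)).
set X := \sum_(l <- U) a l0 l * m l.
(* Solve the first equation for m l0 and substitute it into the others. *)
have h0 : N (m l0 - w * X).
  have := hm l0 (mem_head _ _); rewrite big_cons -/X => h.
  have -> : m l0 - w * X = w * (m l0 - (a l0 l0 * m l0 + X)).
    have e : m l0 = w * (1 - a l0 l0) * m l0 by rewrite hw mul1r.
    by rewrite [in LHS]e; ring.
  exact: idealMl.
have hU : forall k, k \in U -> N (m k).
  apply: (IH (fun k l => a k l + a k l0 * w * a l0 l)) => // [k l hk hl|k hk].
    apply: idealD => //; first by apply: ha; rewrite inE ?hk ?hl orbT.
    by apply: idealMl => //; apply: ha; rewrite ?inE ?hl ?orbT ?eqxx.
  have := hm k; rewrite inE hk orbT big_cons => /(_ isT) h.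
  have -> : m k - \sum_(l <- U) (a k l + a k l0 * w * a l0 l) * m l =
     (m k - (a k l0 * m l0 + \sum_(l <- U) a k l * m l)) + a k l0 * (m l0 - w * X).
    under eq_bigr do rewrite mulrDl.
    rewrite big_split /= [X in _ - (_ + X)](_ : _ = a k l0 * w * X); first ring.
    by rewrite /X mulr_sumr; apply: eq_bigr => l _; rewrite !mulrA.
  by apply: idealD => //; apply: idealMl.
move=> k; rewrite inE => /orP[/eqP ->|]; last exact: hU.
apply: (ideal_subK hN h0); apply: idealMl => //; rewrite /X; apply: ideal_sum_seq => // l hl.
by apply: idealMl => //; apply: hU.
Qed.

Section QuotBasis.
Variables (S : comNzRingType) (I : S -> Prop) (d : nat) (J : eqType) (e : J -> S).
Hypothesis he : quot_basis I d predT e.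

Lemma quot_basis_common_coords (A : eqType) (U : seq A) (g : A -> S) :
  (forall u, u \in U -> ideal_pow I d (g u)) ->
  exists (T : seq J) (al : A -> J -> S), uniq T /\
    forall u, u \in U -> ideal_pow I d.+1 (g u - \sum_(b <- T) al u b * e b).
Proof.
case: he => _ hspan _ hg.
have hex u : u \in U -> exists p : seq J * (J -> S),
    ideal_pow I d.+1 (g u - \sum_(j <- p.1) p.2 j * e j).
  by move=> /hg /hspan [s0 [c0 [_ h]]]; exists (s0, c0).
have [fp hfp] := seq_choice ([::], fun _ : J => 0 : S) hex.
pose T := undup (flatten [seq (fp u).1 | u <- U]).
have hext u : u \in U -> exists al : J -> S,
    ideal_pow I d.+1 (g u - \sum_(b <- T) al b * e b).
  move=> hu; have sub : {subset (fp u).1 <= T}.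
    by move=> j hj; rewrite mem_undup; apply/flattenP; exists (fp u).1 => //; apply: map_f.
  have [al eal] := @sum_over_superset _ _ e _ _ (fp u).2 (undup_uniq _) sub.
  by exists al; rewrite -eal; apply: hfp.
have [al hal] := seq_choice (fun _ : J => 0 : S) hext.
by exists T, al; split=> //; apply: undup_uniq.
Qed.

Lemma quot_basis_coords_vanish (A : eqType) (U : seq A) (g : A -> S) (T : seq J)
    (al : A -> J -> S) (c : A -> S) : uniq T ->
  (forall u, u \in U -> ideal_pow I d.+1 (g u - \sum_(b <- T) al u b * e b)) ->
  ideal_pow I d.+1 (\sum_(u <- U) c u * g u) ->
  forall b, b \in T -> I (\sum_(u <- U) c u * al u b).
Proof.
case: he => _ _ he_indep uT hal hsum b hb.
have hpow := ideal_pow_ideal I d.+1.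
apply: (he_indep T (fun b => \sum_(u <- U) c u * al u b) uT) => //; first exact/allP.
have -> : \sum_(b <- T) (\sum_(u <- U) c u * al u b) * e b =
    \sum_(u <- U) c u * g u - \sum_(u <- U) c u * (g u - \sum_(b <- T) al u b * e b).
  under [X in _ = _ - X]eq_bigr do rewrite mulrBr.
  rewrite sumrB opprB addrC subrK.
  under eq_bigr do rewrite mulr_suml.
  rewrite exchange_big /=; apply: eq_bigr => u _; rewrite mulr_sumr.
  by apply: eq_bigr => b0 _; rewrite mulrA.
apply: idealB => //; apply: ideal_sum_seq => // u hu.
by apply: idealMl => //; apply: hal.
Qed.

End QuotBasis.

Section Gamma.
Variables (S : comNzRingType) (n I : S -> Prop) (r : nat) (x : 'I_r -> S).
Hypothesis n_ideal : is_ideal n.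
Hypothesis unit_1Bn : forall a, n a -> exists w, w * (1 - a) = 1.
Hypothesis unit_notin_n : forall c, ~ n c -> exists w, w * c = 1.
Hypotheses (hI : is_ideal I) (hx : forall k, I (x k)) (hgen : forall f, I f -> gen_by x f).
Implicit Types (u v w : mon r) (d : nat) (f y : S).

(* Generators of n I^d + I^(d+1). *)
Definition negligible d y :=
  (exists a v, [/\ n a, mdeg v = d & y = a * monx x v]) \/ ideal_pow I d.+1 y.

Definition lex_lower u y := exists v, [/\ mdeg v = mdeg u, ltlex v u & y = monx x v].

Definition lex_lower_span u := span (fun y => lex_lower u y \/ negligible (mdeg u) y).

Definition Gamma : pred (mon r) := fun u => asbool (~ lex_lower_span u (monx x u)).

Lemma Gamma_standard : standard_set Gamma.
Proof.
move=> u v hvu /asboolP hu; apply/asboolP => hv; apply: hu.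
rewrite -(mon_subK hvu) monx_add.
apply: span_mulr hv => y [[v' [hd hl ->]]|[[a [v' [ha hd ->]]]|hy]]; apply: span_mem.
- left; exists (mon_add v' (mon_sub u v)).
  by rewrite -monx_add !mdeg_add hd; split=> //; apply: ltlex_add.
- right; left; exists a, (mon_add v' (mon_sub u v)).
  by rewrite -mulrA -monx_add !mdeg_add hd.
- right; right; rewrite mdeg_add -addSn.
  by apply: ideal_powD => //; apply: monx_ideal_pow.
Qed.

Lemma monx_in_Gamma_span d u : mdeg u = d ->
  span (fun y => (exists v, [/\ Gamma v, mdeg v = d & y = monx x v]) \/ negligible d y)
    (monx x u).
Proof.
move=> hu; have : u \in mons_deg predT d by rewrite mem_mons_deg hu eqxx.
move: u {hu}; apply: (@seq_strict_ind _ _ (@ltlex_trans r) (@ltlex_irr r) _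
    (fun u => span _ (monx x u))).
move=> u; rewrite mem_mons_deg => /eqP hu IH.
case: (asboolP (~ lex_lower_span u (monx x u))) => [hG|/NNPP hW].
  by apply: span_mem; left; exists u; split=> //; apply/asboolP.
apply: span_sub hW => y [[v [hd hl ->]]|hy]; last by apply: span_mem; right; rewrite -hu.
by apply: IH => //; rewrite mem_mons_deg hd hu eqxx.
Qed.

Definition Gamma_comb d f :=
  exists c, ideal_pow I d.+1 (f - \sum_(v <- mons_deg Gamma d) c v * monx x v).

Lemma Gamma_comb_ideal d : is_ideal (Gamma_comb d).
Proof.
have hpow := ideal_pow_ideal I d.+1.
split.
- exists (fun _ => 0); rewrite big1 ?subr0; first exact: ideal0.
  by move=> v _; rewrite mul0r.
- move=> a b [c1 h1] [c2 h2]; exists (fun v => c1 v + c2 v).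
  under eq_bigr do rewrite mulrDl.
  by rewrite big_split /= opprD addrACA; apply: idealD.
- move=> c0 a [c1 h1]; exists (fun v => c0 * c1 v).
  under eq_bigr do rewrite -mulrA.
  by rewrite -mulr_sumr -mulrBr; apply: idealMl.
Qed.

Lemma Gamma_comb_monx d u : Gamma u -> mdeg u = d -> Gamma_comb d (monx x u).
Proof.
move=> hG hu; exists (fun v => if v == u then 1 else 0).
rewrite sum_kronecker ?uniq_mons_deg ?mem_mons_deg ?hG ?hu ?eqxx // mul1r subrr.
exact: ideal0 (ideal_pow_ideal _ _).
Qed.

Lemma Gamma_comb_pow d y : ideal_pow I d.+1 y -> Gamma_comb d y.
Proof. by move=> hy; exists (fun _ => 0); rewrite big1 ?subr0 // => v _; rewrite mul0r. Qed.

Lemma monx_Gamma_comb_mod_n d u : mdeg u = d ->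
  exists a : mon r -> S, (forall v, n (a v)) /\
    Gamma_comb d (monx x u - \sum_(v <- mons_deg predT d) a v * monx x v).
Proof.
move=> hu; have [f1 [f' [h1 h' ->]]] := span_splitU (monx_in_Gamma_span hu).
have [f2 [f3 [h2 h3 ->]]] := span_splitU h'.
have [a [ha ->]] : exists a, (forall v, n (a v)) /\
    f2 = \sum_(v <- mons_deg predT d) a v * monx x v.
  apply: (span_as_sum n_ideal (uniq_mons_deg _ _) _ h2) => y [a [v [ha hv ->]]].
  by exists a, v; rewrite mem_mons_deg hv eqxx.
exists a; split=> //; rewrite addrA addrAC addrK; apply: idealD (Gamma_comb_ideal d) _ _.
- by apply: (span_min (Gamma_comb_ideal d) _ h1) => y [v [hG hv ->]]; apply: Gamma_comb_monx.
- apply: Gamma_comb_pow; exact: span_min (ideal_pow_ideal _ _) _ h3.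
Qed.

Lemma Gamma_generates d f : ideal_pow I d f -> Gamma_comb d f.
Proof.
move=> hf.
have [A hA] := seq_choice (fun _ : mon r => 0 : S) (s := mons_deg predT d)
  (fun u hu => monx_Gamma_comb_mod_n (eqP (etrans (esym (mem_mons_deg _ _ _)) hu))).
have hmon := nakayama_system n_ideal unit_1Bn (Gamma_comb_ideal d) (uniq_mons_deg _ _)
  (fun k l hk _ => proj1 (hA k hk) l) (fun k hk => proj2 (hA k hk)).
apply: (span_min (Gamma_comb_ideal d) _ (ideal_pow_span_monx hgen hf)) => y [v [hv ->]].
by apply: hmon; rewrite mem_mons_deg hv eqxx.
Qed.

Lemma Gamma_indep_mod_n d (q : mon r -> S) :
  span (negligible d) (\sum_(v <- mons_deg Gamma d) q v * monx x v) ->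
  forall u, u \in mons_deg Gamma d -> n (q u).
Proof.
set U := mons_deg Gamma d => hsum.
have uU : uniq U := uniq_mons_deg _ _.
apply: (@seq_strict_ind _ (fun a b => ltlex b a) (fun a b c h1 h2 => ltlex_trans h2 h1)
  (@ltlex_irr r) _ (fun u => n (q u))).
move=> u hu IH; apply: NNPP => /unit_notin_n [w hw].
move: (hu); rewrite mem_mons_deg => /andP[/asboolP hG /eqP hd]; apply: hG.
(* Lex-larger terms have coefficients in n by induction, so u(x) is a
   combination of lex-smaller monomials modulo n I^d + I^(d+1). *)
have -> : monx x u = w * (\sum_(v <- U) q v * monx x v -
                          \sum_(v <- rem u U) q v * monx x v).
  by rewrite (big_rem u) //= addrK mulrA hw mul1r.
have hW := span_ideal (fun y => lex_lower u y \/ negligible (mdeg u) y).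
apply: idealMl => //; apply: idealB => //.
  by apply: span_sub hsum => y hy; apply: span_mem; right; rewrite hd.
apply: ideal_sum_seq => // v hv.
have hvU : v \in U by apply: mem_rem hv.
have hvu : v != u by move: hv; rewrite mem_rem_uniq // inE => /andP[].
have hdv : mdeg v = mdeg u by move: hvU; rewrite mem_mons_deg hd => /andP[_ /eqP].
case/orP: (ltlex_total hvu) => hl.
  by apply: idealMl => //; apply: span_mem; left; exists v.
by apply: span_mem; right; left; exists (q v), v; split=> //; apply: IH.
Qed.

Lemma Gamma_indep d (J : eqType) (e : J -> S) : quot_basis I d predT e ->
  forall (s : seq (mon r)) (c : mon r -> S), uniq s ->
  all [pred u | Gamma u && (mdeg u == d)] s ->
  ideal_pow I d.+1 (\sum_(j <- s) c j * monx x j) -> forall j, j \in s -> I (c j).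
Proof.
move=> he s c us hs hsum; set U := mons_deg Gamma d.
have uU : uniq U := uniq_mons_deg _ _.
have sU : {subset s <= U} by move=> u hu; rewrite mem_mons_deg; apply: (allP hs).
have hpow := ideal_pow_ideal I d.+1.
have [he_mem _ _] := he.
have hU u : u \in U -> ideal_pow I d (monx x u).
  by rewrite mem_mons_deg => /andP[_ /eqP <-]; apply: monx_ideal_pow.
have [T [al [uT hal]]] := quot_basis_common_coords he hU.
have [be hbe] := seq_choice (fun _ : mon r => 0 : S) (s := T)
  (fun b _ => Gamma_generates (he_mem b isT)).
pose P u v := \sum_(b <- T) al u b * be b v.
pose delta u v : S := if u == v then 1 else 0.
(* The two changes of coordinates compose to the identity modulo n. *)
have hPn v u : v \in U -> u \in U -> n (delta v u - P u v).
  move=> hv hu; apply: (Gamma_indep_mod_n (q := fun w => delta w u - P u w)) hv.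
  apply: span_mem; right; under eq_bigr do rewrite mulrBl.
  rewrite sumrB (sum_kronecker _ _ uU hu) mul1r.
  exact: congr_coords_trans hbe _ (hal u hu).
pose c' u := if u \in s then c u else 0.
have hcA : forall b, b \in T -> I (\sum_(u <- U) c' u * al u b).
  by apply: (quot_basis_coords_vanish he (c := c') uT hal); rewrite sum_restrict.
have hc' := nakayama_system n_ideal unit_1Bn hI uU (m := c') hPn.
move=> j hj; suff : I (c' j) by rewrite /c' hj.
apply: hc' (sU j hj) => v hv.
rewrite sum_id_sub_comp //.
by apply: ideal_sum_seq => // b hb; apply: idealMr => //; apply: hcA.
Qed.

Lemma Gamma_quot_basis : (forall i, quot_free I i) ->
  forall i, quot_basis I i [pred u | Gamma u && (mdeg u == i)] (monx x).
Proof.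
move=> hfree i; split.
- by move=> u /andP[_ /eqP <-]; apply: monx_ideal_pow.
- move=> f /Gamma_generates [c hc].
  by exists (mons_deg Gamma i), c; split=> //; apply/allP => u; rewrite mem_mons_deg.
- by have [J [e he]] := hfree i; apply: Gamma_indep he.
Qed.

End Gamma.

Section Liftings.
Variables (S : comNzRingType) (I : S -> Prop).
Hypothesis hI : is_ideal I.

Lemma lifting_section L : lifting_image I L ->
  exists sg : S -> S, forall a, L (sg a) /\ I (a - sg a).
Proof.
case=> _ hL; apply: (choice (fun a b => L b /\ I (a - b))) => a.
by have [b [hb hab _]] := hL a; exists b.
Qed.

Lemma lifting_inj L b b' : lifting_image I L -> L b -> L b' -> I (b - b') -> b = b'.
Proof.
case=> _ hL hb hb' hbb'; have [b0 [_ _ uniq_b0]] := hL b.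
rewrite (uniq_b0 b' hb' hbb'); apply: uniq_b0 => //.
by rewrite subrr; apply: ideal0.
Qed.

(* The clause [I b -> b = 0] makes 0 the representative of the class of 0
   and is vacuous on every other class. *)
Definition coset_rep (a : S) : S :=
  epsilon (inhabits 0) (fun b => I (a - b) /\ (I b -> b = 0)).

Lemma coset_rep_spec a : I (a - coset_rep a) /\ (I (coset_rep a) -> coset_rep a = 0).
Proof.
apply: (epsilon_spec (inhabits (0 : S)) (fun b => I (a - b) /\ (I b -> b = 0))).
case: (classic (I a)) => ha; first by exists 0; rewrite subr0.
by exists a; rewrite subrr; split=> [|/ha]; [apply: ideal0|].
Qed.

Lemma coset_rep_congr a a' : I (a - a') -> coset_rep a = coset_rep a'.
Proof.
move=> haa'; rewrite /coset_rep; congr epsilon.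
apply: functional_extensionality => b; apply: propositional_extensionality.
split=> -[hab hb]; split=> //.
  by rewrite -(subrKA a); apply: idealD => //; apply: ideal_subC.
by rewrite -(subrKA a'); apply: idealD.
Qed.

Lemma lifting_exists : exists L, lifting_image I L.
Proof.
exists (fun b => coset_rep b = b); split.
  have [h0 h0'] := coset_rep_spec 0.
  by apply: h0'; move: h0; rewrite sub0r => /(idealN hI); rewrite opprK.
move=> a; have [ha _] := coset_rep_spec a.
exists (coset_rep a); split=> // [|b' hb' hab'].
  by apply: coset_rep_congr; apply: ideal_subC.
by rewrite -hb'; apply: coset_rep_congr; apply: ideal_subC.
Qed.

End Liftings.

Section TruncatedSums.
Variables (S : comNzRingType) (I : S -> Prop) (r : nat) (x : 'I_r -> S) (G : pred (mon r)).
Hypotheses (hI : is_ideal I) (hx : forall k, I (x k)).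
Implicit Types (c : mon r -> S) (f : S).

Lemma trunc_sum_widen i j N c : (j <= N)%N ->
  trunc_sum x G i j c =
  \sum_(u <- mons_below r N | G u && (i <= mdeg u < j)%N) c u * monx x u.
Proof.
move=> hjN; rewrite /trunc_sum -big_filter -[RHS]big_filter; apply: perm_big.
apply: uniq_perm; try exact/filter_uniq/uniq_mons_below.
move=> u; rewrite !mem_filter; case: (boolP (G u && _)) => //= /andP[_ /andP[_ h]].
by rewrite !mons_below_mdeg // (leq_trans h hjN).
Qed.

Lemma trunc_sum_split i j k c : (i <= j)%N -> (j <= k)%N ->
  trunc_sum x G i k c = trunc_sum x G i j c + trunc_sum x G j k c.
Proof.
move=> hij hjk; rewrite !(@trunc_sum_widen _ _ k) // (bigID (fun u => mdeg u < j)%N) /=.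
by congr (_ + _); apply: eq_bigl => u; case: (G u) => //=; lia.
Qed.

Lemma eq_trunc_sum i j c c' : (forall u, G u -> (i <= mdeg u < j)%N -> c u = c' u) ->
  trunc_sum x G i j c = trunc_sum x G i j c'.
Proof. by move=> h; apply: eq_bigr => u /andP[h1 h2]; rewrite h. Qed.

Lemma trunc_sum_ideal_pow i j c : ideal_pow I i (trunc_sum x G i j c).
Proof.
apply: ideal_sum => [|u /andP[_ /andP[h _]]]; first exact: ideal_pow_ideal.
apply: idealMl; first exact: ideal_pow_ideal.
by apply: (ideal_pow_le h); apply: monx_ideal_pow.
Qed.

Lemma trunc_sum0 i j : trunc_sum x G i j (fun _ => 0) = 0.
Proof. by rewrite /trunc_sum big1 // => u _; rewrite mul0r. Qed.

Lemma trunc_sum_deg i c : trunc_sum x G i i.+1 c = \sum_(u <- mons_deg G i) c u * monx x u.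
Proof. by rewrite /trunc_sum big_filter. Qed.

Lemma trunc_sum_rem i j k c f : (i <= j)%N -> (j <= k)%N ->
  ideal_pow I k (f - trunc_sum x G i k c) -> ideal_pow I j (f - trunc_sum x G i j c).
Proof.
move=> hij hjk; rewrite (trunc_sum_split c hij hjk) opprD addrA => h.
rewrite -(subrK (trunc_sum x G j k c) (f - _)).
apply: idealD; [exact: ideal_pow_ideal | exact: ideal_pow_le h | exact: trunc_sum_ideal_pow].
Qed.

Lemma series_rep_trunc i c f : series_rep I x G i c f ->
  forall j, (i <= j)%N -> ideal_pow I j (f - trunc_sum x G i j c).
Proof.
move=> hs j hij; have [N hN] := hs j.
have := hN (maxn N j) (leq_maxl _ _); rewrite (trunc_sum_split c hij (leq_maxr _ _)) => h.
have -> : f - trunc_sum x G i j c = trunc_sum x G j (maxn N j) c -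
    (trunc_sum x G i j c + trunc_sum x G j (maxn N j) c - f) by ring.
by apply: idealB; [apply: ideal_pow_ideal | apply: trunc_sum_ideal_pow |].
Qed.

End TruncatedSums.

Section Expandability.
Variables (S : comNzRingType) (I : S -> Prop) (r : nat) (x : 'I_r -> S) (G : pred (mon r)).
Hypotheses (hI : is_ideal I) (hx : forall k, I (x k)).
Implicit Types (c : mon r -> S) (f : S).

Lemma quot_basis_expandable i :
  quot_basis I i [pred u | G u && (mdeg u == i)] (monx x) -> expandable I x G i i.+1.
Proof.
move=> [hmem hspan hindep] L hL f hf; have [sg hsg] := lifting_section hL.
have hpow := ideal_pow_ideal I i.+1.
split.
- have [s [c0 [hs hr]]] := hspan f hf.
  have sub : {subset s <= mons_deg G i}.
    by move=> u hu; rewrite mem_mons_deg; apply: (allP hs).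
  have [c1 e1] := @sum_over_superset _ _ (monx x) _ _ c0 (uniq_mons_deg _ _) sub.
  exists (fun u => sg (c1 u)); split=> [u _ _|]; first exact: (hsg _).1.
  rewrite trunc_sum_deg.
  have -> : f - \sum_(u <- mons_deg G i) sg (c1 u) * monx x u =
    (f - \sum_(j <- s) c0 j * monx x j) +
    \sum_(u <- mons_deg G i) (c1 u - sg (c1 u)) * monx x u.
    rewrite e1; under [X in _ = _ + X]eq_bigr do rewrite mulrBl.
    by rewrite sumrB addrA subrK.
  apply: idealD hr _ => //; apply: ideal_sum_seq => // u hu.
  apply: ideal_powS_mul => //; first exact: (hsg _).2.
  by apply: hmem; move: hu; rewrite mem_mons_deg.
- move=> c c' hc hc' h h' u hG hd.
  apply: (lifting_inj hI hL); [exact: hc | exact: hc' |].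
  apply: (hindep (mons_deg G i) (fun u => c u - c' u) (uniq_mons_deg _ _)).
  + by apply/allP => v; rewrite mem_mons_deg.
  + have -> : \sum_(j <- mons_deg G i) (c j - c' j) * monx x j =
        (f - trunc_sum x G i i.+1 c') - (f - trunc_sum x G i i.+1 c).
      by rewrite !trunc_sum_deg; under eq_bigr do rewrite mulrBl; rewrite sumrB; ring.
    exact: idealB.
  + by rewrite mem_mons_deg hG -leq_ltnS_eq hd.
Qed.

Lemma expandable_quot_basis i :
  expandable I x G i i.+1 -> quot_basis I i [pred u | G u && (mdeg u == i)] (monx x).
Proof.
move=> he; have [L hL] := lifting_exists hI; have [sg hsg] := lifting_section hL.
have hpow := ideal_pow_ideal I i.+1.
split.
- by move=> u /andP[_ /eqP <-]; apply: monx_ideal_pow.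
- move=> f hf; have [[c [_ hc]] _] := he L hL f hf.
  exists (mons_deg G i), c; split; first by apply/allP => u; rewrite mem_mons_deg.
  by rewrite -trunc_sum_deg.
- move=> s c us hs hsum j hj.
  have sU : {subset s <= mons_deg G i} by move=> u hu; rewrite mem_mons_deg; apply: (allP hs).
  pose c' u := if u \in s then c u else 0.
  pose ct u := sg (c' u).
  (* The lifted coefficients of the relation and 0 expand the same element. *)
  have h0 : ideal_pow I i.+1 (trunc_sum x G i i.+1 ct - trunc_sum x G i i.+1 (fun _ => 0)).
    rewrite trunc_sum0 subr0 trunc_sum_deg.
    have -> : \sum_(u <- mons_deg G i) ct u * monx x u =
        \sum_(u <- mons_deg G i) c' u * monx x u -
        \sum_(u <- mons_deg G i) (c' u - ct u) * monx x u.
      under [X in _ = _ - X]eq_bigr do rewrite mulrBl.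
      by rewrite sumrB opprB addrC subrK.
    rewrite sum_restrict ?uniq_mons_deg //; apply: idealB hsum _ => //.
    apply: ideal_sum_seq => // u hu; apply: ideal_powS_mul => //; first exact: (hsg _).2.
    by move: hu; rewrite mem_mons_deg => /andP[_ /eqP <-]; apply: monx_ideal_pow.
  have [_ huniq] := he L hL _ (trunc_sum_ideal_pow G hI hx i i.+1 ct).
  have hjU := sU j hj; move: (hjU); rewrite mem_mons_deg => /andP[hG /eqP hd].
  have hrefl : ideal_pow I i.+1 (trunc_sum x G i i.+1 ct - trunc_sum x G i i.+1 ct).
    by rewrite subrr; apply: ideal0.
  have := huniq ct (fun _ => 0) (fun u _ _ => (hsg _).1) (fun _ _ _ => hL.1) hrefl h0 j hG.
  rewrite leq_ltnS_eq hd eqxx => /(_ isT) ct0.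
  by have := (hsg (c' j)).2; rewrite -/(ct j) ct0 subr0 /c' hj.
Qed.

Lemma expandable_trans i j : (i < j)%N ->
  expandable I x G i j -> expandable I x G j j.+1 -> expandable I x G i j.+1.
Proof.
move=> hij E1 E2 L hL f hf.
have hsplit c := trunc_sum_split x G c (ltnW hij) (leqnSn j).
split.
- have [[c [hc hr]] _] := E1 L hL f hf.
  have [[c2 [hc2 hr2]] _] := E2 L hL _ hr.
  pose c3 u := if (mdeg u < j)%N then c u else c2 u.
  exists c3; split.
    by move=> u hG hu; rewrite /c3; case: ltnP => h; [apply: hc | apply: hc2] => //; lia.
  rewrite hsplit opprD addrA.
  have -> : trunc_sum x G i j c3 = trunc_sum x G i j c.
    by apply: eq_trunc_sum => u _ /andP[_ h]; rewrite /c3 h.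
  have -> : trunc_sum x G j j.+1 c3 = trunc_sum x G j j.+1 c2.
    by apply: eq_trunc_sum => u _ /andP[h _]; rewrite /c3 ltnNge h.
  exact: hr2.
- move=> c c' hc hc' h h' u hG hu.
  have hr := trunc_sum_rem hI hx (ltnW hij) (leqnSn j) h.
  have hr' := trunc_sum_rem hI hx (ltnW hij) (leqnSn j) h'.
  have hw c0 : coefs_in G L i j.+1 c0 -> coefs_in G L i j c0.
    by move=> hc0 v hv hvd; apply: hc0 => //; lia.
  have [_ U1] := E1 L hL f hf.
  have eq1 := U1 c c' (hw _ hc) (hw _ hc') hr hr'.
  case: (ltnP (mdeg u) j) => hdj; first by apply: eq1 => //; lia.
  have [_ U2] := E2 L hL _ hr.
  apply: (U2 c c') => //; try lia.
  + by move=> v hv hvd; apply: hc => //; lia.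
  + by move=> v hv hvd; apply: hc' => //; lia.
  + by rewrite -addrA -opprD -hsplit.
  + by rewrite (eq_trunc_sum x eq1) -addrA -opprD -hsplit.
Qed.

Lemma expandable_chain : (forall i, expandable I x G i i.+1) ->
  forall i j, (i < j)%N -> expandable I x G i j.
Proof.
move=> E i j /subnK <-; elim: (j - i.+1)%N => [|k IH]; first exact: E.
by rewrite addSn; apply: expandable_trans => //; lia.
Qed.

Section Chain.
Hypothesis E : forall i j, (i < j)%N -> expandable I x G i j.
Variables (L : S -> Prop) (i : nat).
Hypothesis hL : lifting_image I L.

Lemma series_expansion_exists f : ideal_pow I i f ->
  exists c, (forall u, G u -> (i <= mdeg u)%N -> L (c u)) /\ series_rep I x G i c f.
Proof.
move=> hf.
have [C hC] : exists C : nat -> mon r -> S, forall N, (i < N)%N ->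
    coefs_in G L i N (C N) /\ ideal_pow I N (f - trunc_sum x G i N (C N)).
  apply: (choice (fun N c => (i < N)%N ->
    coefs_in G L i N c /\ ideal_pow I N (f - trunc_sum x G i N c))) => N.
  case: (ltnP i N) => [hN|_]; last by exists (fun _ => 0).
  by have [[c hc] _] := @E i N hN L hL f hf; exists c.
have C_compat N M : (i < N)%N -> (N <= M)%N ->
    forall u, G u -> (i <= mdeg u < N)%N -> C N u = C M u.
  move=> hN hNM u hG hu; have [_ U] := @E i N hN L hL f hf.
  have [hcM hrM] := hC M (leq_trans hN hNM).
  apply: (U (C N) (C M)) => //; first exact: (hC N hN).1.
  + by move=> v hv hvd; apply: hcM => //; lia.
  + exact: (hC N hN).2.
  + exact: trunc_sum_rem (ltnW hN) hNM hrM.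
exists (fun u => C (mdeg u).+1 u); split.
  by move=> u hG hd; apply: (hC _ _).1 => //; lia.
move=> k; exists (maxn k i.+1) => p hp.
have hip : (i < p)%N by lia.
have -> : trunc_sum x G i p (fun u => C (mdeg u).+1 u) = trunc_sum x G i p (C p).
  by apply: eq_trunc_sum => u hG hu; apply: C_compat => //; lia.
apply: ideal_subC; first exact: ideal_pow_ideal.
by apply: (ideal_pow_le _ (hC p hip).2); lia.
Qed.

Lemma series_expansion_unique f c c' : ideal_pow I i f ->
  (forall u, G u -> (i <= mdeg u)%N -> L (c u)) ->
  (forall u, G u -> (i <= mdeg u)%N -> L (c' u)) ->
  series_rep I x G i c f -> series_rep I x G i c' f ->
  forall u, G u -> (i <= mdeg u)%N -> c u = c' u.
Proof.
move=> hf hc hc' hs hs' u hG hd.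
have [_ U] := @E i (mdeg u).+1 hd L hL f hf.
apply: (U c c') => //.
+ by move=> v hv hvd; apply: hc => //; lia.
+ by move=> v hv hvd; apply: hc' => //; lia.
+ by apply: (series_rep_trunc hI hx hs); lia.
+ by apply: (series_rep_trunc hI hx hs'); lia.
+ by rewrite hd ltnSn.
Qed.

End Chain.

Lemma expandable_inf_of_chain : (forall i j, (i < j)%N -> expandable I x G i j) ->
  forall i, expandable_inf I x G i.
Proof.
move=> E i L hL f hf; split; first exact: series_expansion_exists.
by move=> c c'; apply: series_expansion_unique.
Qed.

Lemma series_rep_extend i L c f : lifting_image I L -> expandable_inf I x G i.+1 ->
  coefs_in G L i i.+1 c -> ideal_pow I i.+1 (f - trunc_sum x G i i.+1 c) ->
  exists c', [/\ forall u, G u -> (i <= mdeg u)%N -> L (c' u),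
    series_rep I x G i c' f & forall u, mdeg u = i -> c' u = c u].
Proof.
move=> hL Einf hc hr.
have [[c1 [hc1 hs1]] _] := Einf L hL _ hr.
pose c' u := if mdeg u == i then c u else c1 u.
exists c'; split=> [u hG hd|k|u hu]; last by rewrite /c' hu eqxx.
  by rewrite /c'; case: eqP => h; [apply: hc | apply: hc1] => //; lia.
have [N hN] := hs1 k; exists (maxn N i.+1) => p hp.
have -> : trunc_sum x G i p c' = trunc_sum x G i i.+1 c + trunc_sum x G i.+1 p c1.
  rewrite (trunc_sum_split x G c' (leqnSn i) (leq_trans (leq_maxr _ _) hp)).
  congr (_ + _); apply: eq_trunc_sum => u _ hu; rewrite /c'.
    by rewrite -leq_ltnS_eq hu.
  by case: eqP => // h; lia.
have -> : trunc_sum x G i i.+1 c + trunc_sum x G i.+1 p c1 - f =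
    trunc_sum x G i.+1 p c1 - (f - trunc_sum x G i i.+1 c) by ring.
by apply: hN; apply: leq_trans (leq_maxl _ _) hp.
Qed.

Lemma expandable_of_inf : (forall i, expandable_inf I x G i) ->
  forall i, expandable I x G i i.+1.
Proof.
move=> Einf i L hL f hf; have [[c [hc hs]] U] := Einf i L hL f hf; split.
  exists c; split; first by move=> u hG hu; apply: hc => //; lia.
  exact: (series_rep_trunc hI hx hs (leqnSn i)).
move=> d d' hd hd' h h' u hG hu.
have [e [he1 he2 he3]] := series_rep_extend hL (Einf i.+1) hd h.
have [e' [he1' he2' he3']] := series_rep_extend hL (Einf i.+1) hd' h'.
have hui : mdeg u = i by move: hu; rewrite leq_ltnS_eq => /eqP.
by rewrite -he3 // -he3' //; apply: (U e e') => //; lia.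
Qed.

Lemma quot_basis_free i : quot_basis I i [pred u | G u && (mdeg u == i)] (monx x) ->
  quot_free I i.
Proof.
move=> [hmem hspan hindep].
pose T := {u : mon r | G u && (mdeg u == i)}.
exists T, (fun j : T => monx x (sval j)); split.
- by move=> j _; apply: hmem; exact: (svalP j).
- move=> f /hspan [s [c [hs hr]]].
  exists (pmap insub s), (fun j : T => c (sval j)); split; first exact/allP.
  rewrite -(big_map val xpredT (fun u => c u * monx x u)) (pmap_filter (insubK _)).
  by rewrite (eq_filter (isSome_insub _)) (all_filterP hs).
- move=> s c us hs hsum j hj.
  pose c' u := if insub u is Some j0 then c j0 else 0.
  have ec' (j0 : T) : c' (sval j0) = c j0 by rewrite /c' valK.
  rewrite -ec'; apply: (hindep (map val s) c').
  + by rewrite map_inj_uniq //; exact: val_inj.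
  + by apply/allP => u /mapP [j0 _ ->]; exact: (svalP j0).
  + by rewrite big_map; under eq_bigr do rewrite ec'.
  + exact: map_f.
Qed.

End Expandability.

Section Equivalences.
Variables (S : comNzRingType) (n I : S -> Prop).
Hypotheses (noeth : noetherian S) (loc : local_ring n) (hI : is_ideal I).

Lemma min_gen_seq_exists : exists r (x : 'I_r -> S), min_gen_seq I x.
Proof.
have hex : exists r, asbool (exists x : 'I_r -> S, generates I x).
  by have [r [x hx]] := noeth hI; exists r; apply/asboolP; exists x.
case: (ex_minnP hex) => r /asboolP [x hx] hmin.
by exists r, x; split=> // r' x' hx'; apply: hmin; apply/asboolP; exists x'.
Qed.

Lemma min_gen_seq_mem r (x : 'I_r -> S) : min_gen_seq I x -> forall k, I (x k).
Proof. by case=> hx _ k; apply: generates_mem hx. Qed.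

Lemma min_gen_seq_gen r (x : 'I_r -> S) : min_gen_seq I x -> forall f, I f -> gen_by x f.
Proof. by case=> hx _ f /hx. Qed.

Lemma standard_sets_weaken (P Q : forall r, ('I_r -> S) -> pred (mon r) -> Prop) :
  (forall r x G, min_gen_seq I x -> P r x G -> Q r x G) ->
  (forall r (x : 'I_r -> S), min_gen_seq I x ->
     exists G : pred (mon r), standard_set G /\ P r x G) ->
  forall r (x : 'I_r -> S), min_gen_seq I x ->
     exists G : pred (mon r), standard_set G /\ Q r x G.
Proof.
move=> PQ hP r x hx; have [G [hG hPG]] := hP r x hx.
by exists G; split=> //; apply: PQ hPG.
Qed.

Lemma strongly_Lech_independent_cond2 : strongly_Lech_independent I -> cond2 I.
Proof.
move=> hfree r x hx; exists (Gamma n I x).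
split; first exact: Gamma_standard hI (min_gen_seq_mem hx).
apply: Gamma_quot_basis => //.
- exact: local_ideal loc.
- by move=> a; apply: local_unit_1B.
- by move=> c; apply: local_unit_notin.
- exact: min_gen_seq_mem hx.
- exact: min_gen_seq_gen hx.
Qed.

Lemma cond2_strongly_Lech_independent : cond2 I -> strongly_Lech_independent I.
Proof.
move=> h2 i; have [r [x hx]] := min_gen_seq_exists.
by have [G [_ hG]] := h2 r x hx; apply: quot_basis_free (hG i).
Qed.

Lemma cond2_cond3 : cond2 I <-> cond3 I.
Proof.
split; apply: standard_sets_weaken => r x G hx hG i.
  exact: quot_basis_expandable.
exact: expandable_quot_basis hI (min_gen_seq_mem hx) _ (hG i).
Qed.

Lemma cond3_cond4 : cond3 I <-> cond4 I.
Proof.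
split; apply: standard_sets_weaken => r x G hx hG; last by move=> i; apply: hG.
exact: expandable_chain hI (min_gen_seq_mem hx) hG.
Qed.

Lemma cond4_cond5 : cond4 I -> cond5 I.
Proof.
apply: standard_sets_weaken => r x G hx hG.
exact: expandable_inf_of_chain hI (min_gen_seq_mem hx) hG.
Qed.

Lemma cond5_cond3 : cond5 I -> cond3 I.
Proof.
apply: standard_sets_weaken => r x G hx hG.
exact: expandable_of_inf hI (min_gen_seq_mem hx) hG.
Qed.

End Equivalences.

Theorem proposition3p9 (S : comNzRingType) (n I : S -> Prop) :
  noetherian S -> local_ring n -> is_ideal I ->
  [/\ strongly_Lech_independent I <-> cond2 I,
      strongly_Lech_independent I <-> cond3 I,
      strongly_Lech_independent I <-> cond4 I &
      complete n -> (strongly_Lech_independent I <-> cond5 I)].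
Proof.
move=> noeth loc hI.
have h1_2 : strongly_Lech_independent I <-> cond2 I.
  split; first exact: strongly_Lech_independent_cond2 noeth loc hI.
  exact: cond2_strongly_Lech_independent noeth hI.
have h1_3 : strongly_Lech_independent I <-> cond3 I by rewrite h1_2 cond2_cond3.
have h1_4 : strongly_Lech_independent I <-> cond4 I by rewrite h1_3 cond3_cond4.
split=> // _; rewrite h1_4; split; first exact: cond4_cond5.
by move=> h5; apply/(cond3_cond4 hI)/(cond5_cond3 hI).
Qed.
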